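(* Over $\operatorname{Spec}(\mathbb Z[1/2])$ there is an isomorphism of representations of $G$ \[ \rho_4\cong 1\oplus\chi\oplus\rho_2 \] such that the projection to the first summand $1$ (the trivial one-dimensional representation) is the trace homomorphism $\rho_4\to 1$.
   Context: Work with group schemes over $\operatorname{Spec}(\mathbb Z)$. Let $H\subset GL_2$ be the subgroup scheme of invertible matrices that are either diagonal or antidiagonal, and $N:H\to\mathbb G_m$ the homomorphism given by the product of the two nonzero entries. Let $G=\ker N$; its points are the matrices $\mathrm{diag}(\alpha,\alpha^{-1})$ and $\begin{pmatrix}0&\beta\\ \beta^{-1}&0\end{pmatrix}$. Let $\rho_2$ be the tautological $2$-dimensional representation of $G\subset GL_2$. The map $q:G\to G$ squaring each matrix entry is a surjective homomorphism with kernel $\mu_2=\{\pm I\}$. The representations $\det(\rho_2)$ and $\rho_2^\vee\otimes\rho_2$ of the source $G$ of $q$ are trivial on $\mu_2$, hence factor through $q$ and define linear representations $\chi$ and $\rho_4$ of the target $G$; the trace $\rho_2^\vee\otimes\rho_2\to 1$ induces the trace homomorphism $\rho_4\to1$. In the claimed isomorphism, $\rho_2$ denotes the tautological representation of the target $G$. *)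

From HB Require Import structures.
From mathcomp Require Import all_boot all_order all_algebra.
Set Implicit Arguments. Unset Strict Implicit. Unset Printing Implicit Defensive.
Import Order.TTheory GRing.Theory Num.Theory.
Local Open Scope ring_scope.

(* Base ring Z[1/2]: the dyadic rationals, i.e. rationals whose reduced      *)
(* denominator is a power of 2.                                              *)
Definition dyadic (q : rat) : bool :=
  [exists k : 'I_`|denq q|%N.+1, denq q == (2 ^ (k : nat))%N%:Z].

Definition dyadic_mx m n (P : 'M[rat]_(m, n)) : bool := [forall i, forall j, dyadic (P i j)].

(* The structure map Z[1/2] -> R for a ring R in which 2 is invertible     *)
Definition dy2R (R : unitRingType) (q : rat) : R :=
  (numq q)%:~R * ((denq q)%:~R)^-1.

(* R-points of the group scheme G = ker (N : H -> G_m).                      *)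
(* H is the closed subscheme of GL_2 which is the (disjoint) union of the    *)
(* diagonal and antidiagonal tori; its ideal in the coordinate ring of GL_2  *)
(* is (x12,x21) \cap (x11,x22) = (x11 x12, x11 x21, x22 x12, x22 x21), and   *)
(* on H the map N is x11 x22 + x12 x21.  Indices 0,1 stand for 1,2.          *)
Definition inG (R : comUnitRingType) (A : 'M[R]_2) : Prop :=
  [/\ A 0 0 * A 0 1 = 0, A 0 0 * A 1 0 = 0, A 1 1 * A 0 1 = 0,
      A 1 1 * A 1 0 = 0 & A 0 0 * A 1 1 + A 0 1 * A 1 0 = 1].
(* (invertibility is automatic: det^2 = N^2 = 1 on these points.)           *)

Definition mx4 (R : nmodType) (rows : seq (seq R)) : 'M[R]_4 :=
  \matrix_(i < 4, j < 4) nth 0 (nth [::] rows i) j.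

(* The squaring homomorphism q : G -> G (on points). *)
Definition sqmx (R : comUnitRingType) (A : 'M[R]_2) : 'M[R]_2 :=
  \matrix_(i, j) (A i j) ^+ 2.

(* The representation rho_2^vee (x) rho_2 = End(rho_2) of the SOURCE G,      *)
(* i.e. X |-> g X g^{-1}, as a 4x4 matrix in the basis E11,E12,E21,E22       *)
(* (indices 0,1,2,3), acting on column vectors.  For g in G,                 *)
(* g^{-1} = [[x22, x12],[x21, x11]] (using the defining equations of G).     *)
Definition Ebasis (k : 'I_4) : 'I_2 * 'I_2 :=
  match val k with 0 => (0,0) | 1 => (0,1) | 2 => (1,0) | _ => (1,1) end.
Definition invG (R : comUnitRingType) (A : 'M[R]_2) : 'M[R]_2 :=
  \matrix_(i, j) (if i == j then A (rev_ord i) (rev_ord j) else A i j).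
Definition endrep (R : comUnitRingType) (A : 'M[R]_2) : 'M[R]_4 :=
  \matrix_(k, l) (A (Ebasis k).1 (Ebasis l).1 * invG A (Ebasis l).2 (Ebasis k).2).

(* chi and rho_4 on the TARGET G, i.e. the unique representations with       *)
(* chi o q = det rho_2 and rho_4 o q = rho_2^vee (x) rho_2.  Writing          *)
(* e = x11 x22 (an idempotent on G: 1 on the diagonal component, 0 on the    *)
(* antidiagonal one), these are given by the polynomial formulas below.      *)
(* (On diag(a,1/a): E11,E22 fixed, E12 |-> a E12, E21 |-> a^-1 E21;          *)
(*  on antidiag(b,1/b): E11 <-> E22, E12 |-> b^-1 E21, E21 |-> b E12.)       *)
Definition chiG (R : comUnitRingType) (A : 'M[R]_2) : R := \det A.

Definition rho4 (R : comUnitRingType) (A : 'M[R]_2) : 'M[R]_4 :=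
  let e := A 0 0 * A 1 1 in
  mx4 [:: [:: e; 0; 0; 1 - e];
          [:: 0; A 0 0; A 0 1; 0];
          [:: 0; A 1 0; A 1 1; 0];
          [:: 1 - e; 0; 0; e]].

Definition sum_rep (R : comUnitRingType) (A : 'M[R]_2) : 'M[R]_4 :=
  mx4 [:: [:: 1; 0; 0; 0];
          [:: 0; chiG A; 0; 0];
          [:: 0; 0; A 0 0; A 0 1];
          [:: 0; 0; A 1 0; A 1 1]].

Definition trace_row : 'rV[rat]_4 := \row_(j < 4) (if (j == 0 :> nat) || (j == 3 :> nat) then 1 else 0).

(* Sanity check of the descent: rho4 o q = rho_2^vee (x) rho_2 and           *)
(* chi o q = det on G-points.                                               *)
Lemma rho4_sq (R : comUnitRingType) (A : 'M[R]_2) :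
  inG A -> rho4 (sqmx A) = endrep A.
Proof.
case=> h1 h2 h3 h4 hN.
apply/matrixP=> i j.
rewrite /rho4 /endrep /mx4 /sqmx /invG !mxE.
have r0 : rev_ord (0 : 'I_2) = 1 by apply/val_inj.
have r1 : rev_ord (1 : 'I_2) = 0 by apply/val_inj.
have ef : (A 0 0 * A 1 1) * (A 0 1 * A 1 0) = 0.
  by rewrite mulrACA h1 mul0r.
have he : A 0 0 ^+ 2 * A 1 1 ^+ 2 = A 0 0 * A 1 1.
  rewrite -exprMn expr2 -{3}[A 0 0 * A 1 1]mulr1 -hN mulrDr ef addr0 //.
have hf : 1 - A 0 0 ^+ 2 * A 1 1 ^+ 2 = A 0 1 * A 1 0.
  by rewrite he -hN addrAC subrr add0r.
case: i => [[|[|[|[|i]]]] Hi] //; case: j => [[|[|[|[|j]]]] Hj] //=;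
  rewrite ?mxE /= ?r0 ?r1 ?he ?hf ?expr2 //.

- by rewrite mulrC h3.
- by rewrite mulrC h1.
- by rewrite mulrC h4.
- by rewrite -he hf mulrC.
- by rewrite mulrC h2.
- by rewrite mulrC.
Qed.

Lemma chi_sq (R : comUnitRingType) (A : 'M[R]_2) :
  inG A -> chiG (sqmx A) = \det A.
Proof.
case=> h1 h2 h3 h4 hN.
have d22 (B : 'M[R]_2) : \det B = B 0 0 * B 1 1 - B 0 1 * B 1 0.
  rewrite (expand_det_row _ 0) !big_ord_recl big_ord0 /cofactor !det_mx11 !mxE /=.
  rewrite addr0 expr0 expr1 !mul1r mulN1r.
  rewrite mulrN.
  by congr (_ - _); congr (_ * _); try congr (B _ _); apply: val_inj.
rewrite /chiG !d22 /sqmx !mxE.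
have ef : (A 0 0 * A 1 1) * (A 0 1 * A 1 0) = 0 by rewrite mulrACA h1 mul0r.
rewrite -!exprMn.
have -> : (A 0 0 * A 1 1) ^+ 2 = A 0 0 * A 1 1.
  by rewrite expr2 -{3}[A 0 0 * A 1 1]mulr1 -hN mulrDr ef addr0.
have -> : (A 0 1 * A 1 0) ^+ 2 = A 0 1 * A 1 0.
  by rewrite expr2 -{3}[A 0 1 * A 1 0]mulr1 -hN mulrDr (mulrC (A 0 1 * A 1 0) (A 0 0 * A 1 1)) ef add0r.
by [].
Qed.

(* On the target G the diagonal point diag(a, 1/a) acts on End(rho_2) by
   fixing E11 and E22 and scaling E12, E21 by a, 1/a, while the antidiagonal
   point with entries b, 1/b swaps E11 and E22 and sends E12, E21 to
   1/b E21, b E12.  So X |-> (tr X, X11 - X22, X12, X21) intertwines rho_4 with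
   1 (+) chi (+) rho_2: E11 + E22 is invariant, E11 - E22 transforms by
   chi = det, which is 1 on the diagonal and -1 on the antidiagonal component,
   and (X12, X21) transforms like the tautological representation.  This
   change of basis is defined over Z; only its inverse,
   X11 = (tr X + (X11 - X22)) / 2, needs 2 to be invertible. *)

From mathcomp Require Import all_boot all_order all_algebra.
From mathcomp Require Import ring.

Set Implicit Arguments.
Unset Strict Implicit.
Unset Printing Implicit Defensive.

Import GRing.Theory.
Local Open Scope ring_scope.

Ltac mx4_entries :=
  apply/matrixP; case=> [[|[|[|[|?]]]] ?] //; case=> [[|[|[|[|?]]]] ?] //;
  rewrite !mxE ?big_ord_recl ?big_ord0 !mxE /=.

Lemma dyadic_pow2 (q : rat) (k : nat) : denq q = (2 ^ k)%N%:Z -> dyadic q.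
Proof.
move=> dq; apply/existsP; exists (inord k); rewrite dq inordK //=.
by rewrite ltnS ltnW // ltn_expl.
Qed.

Lemma dyadic0 : dyadic 0. Proof. exact: (@dyadic_pow2 _ 0). Qed.
Lemma dyadic1 : dyadic 1. Proof. exact: (@dyadic_pow2 _ 0). Qed.
Lemma dyadicV2 : dyadic 2^-1. Proof. exact: (@dyadic_pow2 _ 1). Qed.

Lemma dyadicN (q : rat) : dyadic (- q) = dyadic q.
Proof. by rewrite /dyadic denqN. Qed.

Lemma dyadic_mx4 (rows : seq (seq rat)) :
  all (all dyadic) rows -> dyadic_mx (mx4 rows).
Proof.
move=> /allP rowsP; apply/forallP=> i; apply/forallP=> j; rewrite mxE.
have [ltir | leri] := ltnP i (size rows); last first.
  by rewrite (nth_default _ leri) nth_nil dyadic0.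
have /allP rowP := rowsP _ (mem_nth [::] ltir).
have [ltjr | lerj] := ltnP j (size (nth [::] rows i)).
  exact/rowP/mem_nth.
by rewrite nth_default // dyadic0.
Qed.

Lemma map_mx4 (R S : nmodType) (f : R -> S) (rows : seq (seq R)) :
  f 0 = 0 -> map_mx f (mx4 rows) = mx4 (map (map f) rows).
Proof.
move=> f0; apply/matrixP=> i j; rewrite !mxE.
have nth_row (r : seq R) n : nth 0 (map f r) n = f (nth 0 r n).
  by elim: r n => [|x r IHr] [|n] //=; rewrite nth_nil f0.
have nth_rows n : nth [::] (map (map f) rows) n = map f (nth [::] rows n).
  by elim: rows n => [|r rows IHrows] [|n] //=; rewrite nth_nil.
by rewrite nth_rows nth_row.
Qed.

Section DyadicToRing.

Variable R : unitRingType.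

Lemma dy2R0 : dy2R R 0 = 0.
Proof. by rewrite /dy2R mul0r. Qed.

Lemma dy2R1 : dy2R R 1 = 1.
Proof. by rewrite /dy2R invr1 mulr1. Qed.

Lemma dy2RN (q : rat) : dy2R R (- q) = - dy2R R q.
Proof. by rewrite /dy2R numqN denqN mulrNz mulNr. Qed.

End DyadicToRing.

Lemma det_mx2 (R : comRingType) (A : 'M[R]_2) :
  \det A = A 0 0 * A 1 1 - A 0 1 * A 1 0.
Proof.
rewrite (expand_det_row _ 0) !big_ord_recl big_ord0 /cofactor !det_mx11 !mxE /=.
rewrite addr0 expr0 expr1 !mul1r mulN1r mulrN.
by congr (_ - _); congr (_ * _); congr (A _ _); apply: val_inj.
Qed.

Lemma inG_offdiag (R : comUnitRingType) (A : 'M[R]_2) :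
  inG A -> A 0 1 * A 1 0 = 1 - A 0 0 * A 1 1.
Proof. by case=> _ _ _ _ <-; rewrite addrC addKr. Qed.

Definition trace_split (R : ringType) : 'M[R]_4 :=
  mx4 [:: [:: 1; 0; 0; 1]; [:: 1; 0; 0; -1]; [:: 0; 1; 0; 0]; [:: 0; 0; 1; 0]].

Definition trace_split_inv : 'M[rat]_4 :=
  mx4 [:: [:: 2^-1; 2^-1; 0; 0]; [:: 0; 0; 1; 0];
          [:: 0; 0; 0; 1]; [:: 2^-1; - 2^-1; 0; 0]].

Lemma dyadic_trace_split : dyadic_mx (trace_split rat).
Proof. by apply: dyadic_mx4; rewrite /= !dyadicN dyadic0 dyadic1. Qed.

Lemma map_trace_split (R : unitRingType) :
  map_mx (dy2R R) (trace_split rat) = trace_split R.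
Proof. by rewrite map_mx4 ?dy2R0 //= !dy2RN dy2R0 dy2R1. Qed.

Lemma dyadic_trace_split_inv : dyadic_mx trace_split_inv.
Proof. by apply: dyadic_mx4; rewrite /= !dyadicN dyadic0 dyadic1 dyadicV2. Qed.

Lemma trace_splitK : trace_split rat *m trace_split_inv = 1%:M.
Proof. by mx4_entries; field. Qed.

Lemma trace_split_invK : trace_split_inv *m trace_split rat = 1%:M.
Proof. by mx4_entries; field. Qed.

Lemma row0_trace_split : row 0 (trace_split rat) = trace_row.
Proof. by apply/matrixP=> i [[|[|[|[|j]]]] ?]; rewrite !mxE. Qed.

Lemma trace_split_intertwines (R : comUnitRingType) (A : 'M[R]_2) :
  inG A -> trace_split R *m rho4 A = sum_rep A *m trace_split R.
Proof.
move=> GA; rewrite /rho4 /sum_rep /chiG det_mx2 (inG_offdiag GA).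
by mx4_entries; ring.
Qed.

Theorem proposition5p1 :
  exists P Q : 'M[rat]_4,
    dyadic_mx P /\ dyadic_mx Q /\ P *m Q = 1%:M /\ Q *m P = 1%:M /\
        (forall (R : comUnitRingType), (2 : R) \is a GRing.unit ->
           forall A : 'M[R]_2, inG A ->
             map_mx (@dy2R R) P *m rho4 A = sum_rep A *m map_mx (@dy2R R) P) /\
    row 0 P = trace_row.
Proof.
exists (trace_split rat), trace_split_inv.
split; first exact: dyadic_trace_split.
split; first exact: dyadic_trace_split_inv.
split; first exact: trace_splitK.
split; first exact: trace_split_invK.
split; last exact: row0_trace_split.
move=> R _ A GA; rewrite map_trace_split.
exact: trace_split_intertwines.
Qed.
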